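(* Let $\mathbf x_1,\ldots,\mathbf x_n\in\mathbb{R}^d\setminus\{\mathbf 0\}$, with $x_{ij}$ the $j$-th coordinate of $\mathbf x_i$, and let $\pi(\beta)\propto\prod_{i=1}^n\frac{1}{1+\exp(\mathbf x_i^T\beta)}$ be the (assumed proper) logit posterior under a flat prior. For $j=1,\ldots,d$ let $$z_j(\beta)=\frac12\sum_{i=1}^n x_{ij}\frac{\exp(\mathbf x_i^T\beta)}{1+\exp(\mathbf x_i^T\beta)}.$$ Then for every $\delta>0$ and every $j$, $\mathbb{E}_\pi[|z_j|^{2+\delta}]<\infty$.
   Context: The $z_j$ are the control variates $-\frac12\partial_{\beta_j}\ln\pi$ of the zero-variance method with linear trial polynomial, for a logit model in which all responses are $0$. *)

From HB Require Import structures.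
From mathcomp Require Import all_boot all_order all_algebra.
From mathcomp Require Import all_classical all_reals all_analysis.
Set Implicit Arguments. Unset Strict Implicit. Unset Printing Implicit Defensive.
Import Order.TTheory GRing.Theory Num.Theory.
Local Open Scope ring_scope.
Local Open Scope classical_set_scope.

(* R^d is modelled as d.-tuple R, with its product (= Borel) sigma-algebra. *)

(* Flat prior: mu is Lebesgue measure on R^d, characterized by its values on
   closed boxes [a_1,b_1] x ... x [a_d,b_d]. *)
Definition is_lebesgue_Rd (R : realType) (d : nat)
  (mu : {measure set (d.-tuple R) -> \bar R}) : Prop :=
  forall a b : d.-tuple R, (forall k, tnth a k <= tnth b k) ->
    mu [set v | forall k, tnth a k <= tnth v k <= tnth b k]
    = (\prod_(k < d) (tnth b k - tnth a k))%:E.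

Definition dotR (R : realType) (d : nat) (u v : d.-tuple R) : R :=
  \sum_(k < d) tnth u k * tnth v k.

(* unnormalized logit posterior (all responses 0, flat prior):
   prod_i 1/(1+exp(x_i^T beta)) *)
Definition logit_lik (R : realType) (d n : nat) (x : 'I_n -> d.-tuple R)
  (beta : d.-tuple R) : R :=
  \prod_(i < n) (1 + expR (dotR (x i) beta))^-1.

Definition logit_Z (R : realType) (d n : nat)
  (mu : {measure set (d.-tuple R) -> \bar R}) (x : 'I_n -> d.-tuple R) : R :=
  fine (\int[mu]_beta (logit_lik x beta)%:E)%E.

Definition logit_post (R : realType) (d n : nat)
  (mu : {measure set (d.-tuple R) -> \bar R}) (x : 'I_n -> d.-tuple R)
  (beta : d.-tuple R) : R :=
  logit_lik x beta / logit_Z mu x.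

Definition zcv (R : realType) (d n : nat) (x : 'I_n -> d.-tuple R)
  (j : 'I_d) (beta : d.-tuple R) : R :=
  2^-1 * \sum_(i < n) tnth (x i) j *
     (expR (dotR (x i) beta) / (1 + expR (dotR (x i) beta))).

(* Each summand of z_j is x_ij times a logistic value in [0, 1), so z_j is
   bounded by (1/2) sum_i |x_ij|; any power of a bounded measurable function
   is integrable against the finite measure pi(beta) dbeta. *)
From HB Require Import structures.
From mathcomp Require Import all_boot all_order all_algebra.
From mathcomp Require Import all_classical all_reals all_analysis.
From mathcomp Require Import measurable_realfun.
Import Order.TTheory GRing.Theory Num.Theory.
Import numFieldNormedType.Exports.
Local Open Scope ring_scope.
Local Open Scope classical_set_scope.

Lemma integral_bounded_mul_lt_pinfty (d : measure_display) (T : measurableType d)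
    (R : realType) (mu : {measure set T -> \bar R}) (f g : T -> R) (K : R) :
  measurable_fun setT f -> measurable_fun setT g ->
  0 <= K -> (forall t, 0 <= f t <= K) -> (forall t, 0 <= g t) ->
  (\int[mu]_t (g t)%:E < +oo)%E ->
  (\int[mu]_t (f t * g t)%:E < +oo)%E.
Proof.
move=> mf mg K_ge0 f_bnd g_ge0 g_fin.
have mgE : measurable_fun setT (fun t => (g t)%:E) by exact/measurable_EFinP.
apply: (@le_lt_trans _ _ (\int[mu]_t (K%:E * (g t)%:E))%E).
  apply: ge0_le_integral => //.
  - by move=> t _; rewrite lee_fin mulr_ge0 ?g_ge0 //; case/andP: (f_bnd t).
  - exact/measurable_EFinP/measurable_funM.
  - exact: emeasurable_funM.
  - move=> t _; rewrite -EFinM lee_fin ler_wpM2r ?g_ge0 //.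
    by case/andP: (f_bnd t).
rewrite ge0_integralZl_EFin //; last by move=> t _; rewrite lee_fin.
by rewrite lte_mul_pinfty // lee_fin.
Qed.

Section Logistic.
Variable R : realType.

Lemma continuous_inv1DexpR : continuous (fun t : R => (1 + expR t)^-1).
Proof.
move=> t; apply: cvgV; first by rewrite gt_eqF // ltr_wpDr ?expR_ge0.
by apply: cvgD; [exact: cvg_cst | exact: continuous_expR].
Qed.

Lemma continuous_logistic : continuous (fun t : R => expR t / (1 + expR t)).
Proof. by move=> t; apply: cvgM; [exact: continuous_expR | exact: continuous_inv1DexpR]. Qed.

Lemma logistic_ge0 (t : R) : 0 <= expR t / (1 + expR t).
Proof. by rewrite divr_ge0 ?addr_ge0 ?expR_ge0. Qed.

Lemma logistic_lt1 (t : R) : expR t / (1 + expR t) < 1.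
Proof.
have pos : 0 < 1 + expR t by rewrite ltr_wpDr ?expR_ge0.
by rewrite ltr_pdivrMr // mul1r ltrDr ltr01.
Qed.

End Logistic.

Section LogitPosterior.
Variables (R : realType) (d n : nat) (x : 'I_n -> d.-tuple R).

Lemma measurable_dotR (u : d.-tuple R) :
  measurable_fun setT (fun b : d.-tuple R => dotR u b).
Proof.
apply: measurable_sum => k.
exact: measurable_funM (measurable_cst _) (measurable_tnth _).
Qed.

Lemma measurable_logit_lik : measurable_fun setT (logit_lik x).
Proof.
apply: measurable_prod => i _.
apply: (measurableT_comp (f := fun t : R => (1 + expR t)^-1)).
  exact: continuous_measurable_fun (@continuous_inv1DexpR R).
exact: measurable_dotR.
Qed.

Lemma logit_lik_ge0 (b : d.-tuple R) : 0 <= logit_lik x b.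
Proof. by apply: prodr_ge0 => i _; rewrite invr_ge0 addr_ge0 ?expR_ge0. Qed.

Lemma logit_Z_ge0 (mu : {measure set (d.-tuple R) -> \bar R}) :
  0 <= logit_Z mu x.
Proof.
by apply/fine_ge0/integral_ge0 => b _; rewrite lee_fin logit_lik_ge0.
Qed.

Lemma measurable_zcv (j : 'I_d) : measurable_fun setT (zcv x j).
Proof.
apply: measurable_funM; first exact: measurable_cst.
apply: measurable_sum => i.
apply: measurable_funM; first exact: measurable_cst.
apply: (measurableT_comp (f := fun t : R => expR t / (1 + expR t))).
  exact: continuous_measurable_fun (@continuous_logistic R).
exact: measurable_dotR.
Qed.

Lemma normr_zcv_le (j : 'I_d) (b : d.-tuple R) :
  `|zcv x j b| <= 2^-1 * \sum_(i < n) `|tnth (x i) j|.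
Proof.
rewrite /zcv normrM ger0_norm ?invr_ge0 ?ler0n //.
rewrite ler_wpM2l ?invr_ge0 ?ler0n //.
apply: (le_trans (ler_norm_sum _ _ _)); apply: ler_sum => i _.
rewrite normrM (ger0_norm (logistic_ge0 _ _)).
by apply: ler_piMr; rewrite ?normr_ge0 ?ltW ?logistic_lt1.
Qed.

Lemma powR_normr_zcv_le (j : 'I_d) (p : R) (b : d.-tuple R) : 0 <= p ->
  `|zcv x j b| `^ p <= (2^-1 * \sum_(i < n) `|tnth (x i) j|) `^ p.
Proof.
move=> p_ge0; apply: ge0_ler_powR; first exact: p_ge0.
- by rewrite nnegrE.
- by rewrite nnegrE mulr_ge0 ?invr_ge0 ?ler0n ?sumr_ge0.
- exact: normr_zcv_le.
Qed.

End LogitPosterior.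

Theorem mainTheorem8 (R : realType) (d n : nat)
  (mu : {measure set (d.-tuple R) -> \bar R})
  (x : 'I_n -> d.-tuple R) (delta : R) (j : 'I_d) :
  is_lebesgue_Rd mu ->
  (forall i, x i != [tuple of nseq d 0]) ->
  (\int[mu]_beta (logit_lik x beta)%:E < +oo)%E ->
  0 < delta ->
  (\int[mu]_beta ((`|zcv x j beta| `^ (2 + delta)) * logit_post mu x beta)%:E
     < +oo)%E.
Proof.
move=> _ _ lik_fin delta_gt0.
set p := 2 + delta; set C := 2^-1 * \sum_(i < n) `|tnth (x i) j|.
have p_ge0 : 0 <= p by rewrite addr_ge0 // ltW.
have Zinv_ge0 : 0 <= (logit_Z mu x)^-1 by rewrite invr_ge0 logit_Z_ge0.
under eq_integral => b _ do rewrite /logit_post mulrA mulrAC.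
apply: (@integral_bounded_mul_lt_pinfty _ _ _ mu _ _ (C `^ p * (logit_Z mu x)^-1))
  => //.
- apply: measurable_funM; last exact: measurable_cst.
  apply: (measurableT_comp (f := fun t : R => t `^ p)); first exact: measurable_powR.
  apply: (measurableT_comp (f := fun t : R => `|t|)); first exact: normr_measurable.
  exact: measurable_zcv.
- exact: measurable_logit_lik.
- by rewrite mulr_ge0 ?powR_ge0.
- move=> b; rewrite mulr_ge0 ?powR_ge0 //=.
  by apply: ler_wpM2r => //; exact: powR_normr_zcv_le.
- exact: logit_lik_ge0.
Qed.
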